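(* Let $J$ be a set and let $L_1,L_2$ be symmetric lists with values in $J$. (1) If there is a morphism $L_1\to L_2$ in $\mathrm{SList}(J)$, then $L_2$ is linear if and only if $L_1$ is linear. (2) If $L_1$ or $L_2$ is linear, there is at most one morphism $L_1\to L_2$ in $\mathrm{SList}(J)$.
   Context: $\mathrm{SList}(J)$ is the category of symmetric lists on $J$: objects are finite lists of elements of $J$; morphisms are generated by $\mathrm{sw}_{a,b,l}:a::b::l\to b::a::l$ (for $a,b\in J$, lists $l$) and $x::_mf:x::l\to x::l'$ (for $f:l\to l'$, $x\in J$), subject to: functoriality of $x::_m-$, naturality of $\mathrm{sw}_{a,b,l}$ in $l$, $\mathrm{sw}_{b,a,l}\circ\mathrm{sw}_{a,b,l}=\mathrm{Id}$, and $\mathrm{sw}_{b,c,a::l}\circ(b::_m\mathrm{sw}_{a,c,l})\circ\mathrm{sw}_{a,b,c::l}=(c::_m\mathrm{sw}_{a,b,l})\circ\mathrm{sw}_{a,c,b::l}\circ(a::_m\mathrm{sw}_{b,c,l})$. A symmetric list is linear if its underlying list has no duplicate entries. *)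

(* The category SList(J) presented by generators and relations:
   morphisms are formal composites of generators (SLTm) modulo the smallest
   congruence (SLEq) containing the category laws and the listed relations. *)
From Stdlib Require Import List.
Import ListNotations.
Set Implicit Arguments.

Inductive SLTm {J : Type} : list J -> list J -> Type :=
| sl_id : forall l, SLTm l l
| sl_comp : forall l1 l2 l3, SLTm l2 l3 -> SLTm l1 l2 -> SLTm l1 l3
| sl_sw : forall (a b : J) l, SLTm (a :: b :: l) (b :: a :: l)
| sl_cons : forall (x : J) l l', SLTm l l' -> SLTm (x :: l) (x :: l').

Arguments sl_id {J} l.
Arguments sl_comp {J l1 l2 l3} g f.
Arguments sl_sw {J} a b l.
Arguments sl_cons {J} x {l l'} f.

Inductive SLEq {J : Type} : forall l l' : list J, SLTm l l' -> SLTm l l' -> Prop :=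
| sle_refl : forall l l' (f : SLTm l l'), SLEq f f
| sle_sym : forall l l' (f g : SLTm l l'), SLEq f g -> SLEq g f
| sle_trans : forall l l' (f g h : SLTm l l'), SLEq f g -> SLEq g h -> SLEq f h
| sle_comp_cong : forall l1 l2 l3 (g g' : SLTm l2 l3) (f f' : SLTm l1 l2),
    SLEq g g' -> SLEq f f' -> SLEq (sl_comp g f) (sl_comp g' f')
| sle_cons_cong : forall x l l' (f f' : SLTm l l'),
    SLEq f f' -> SLEq (sl_cons x f) (sl_cons x f')
| sle_id_l : forall l l' (f : SLTm l l'), SLEq (sl_comp (sl_id l') f) f
| sle_id_r : forall l l' (f : SLTm l l'), SLEq (sl_comp f (sl_id l)) f
| sle_assoc : forall l1 l2 l3 l4 (h : SLTm l3 l4) (g : SLTm l2 l3) (f : SLTm l1 l2),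
    SLEq (sl_comp h (sl_comp g f)) (sl_comp (sl_comp h g) f)
| sle_cons_id : forall x l, SLEq (sl_cons x (sl_id l)) (sl_id (x :: l))
| sle_cons_comp : forall x l1 l2 l3 (g : SLTm l2 l3) (f : SLTm l1 l2),
    SLEq (sl_cons x (sl_comp g f)) (sl_comp (sl_cons x g) (sl_cons x f))
| sle_sw_nat : forall a b l l' (f : SLTm l l'),
    SLEq (sl_comp (sl_sw a b l') (sl_cons a (sl_cons b f)))
         (sl_comp (sl_cons b (sl_cons a f)) (sl_sw a b l))
| sle_sw_inv : forall a b l,
    SLEq (sl_comp (sl_sw b a l) (sl_sw a b l)) (sl_id (a :: b :: l))
| sle_sw_yb : forall a b c l,
    SLEq (sl_comp (sl_sw b c (a :: l)) (sl_comp (sl_cons b (sl_sw a c l)) (sl_sw a b (c :: l))))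
         (sl_comp (sl_cons c (sl_sw a b l)) (sl_comp (sl_sw a c (b :: l)) (sl_cons a (sl_sw b c l)))).

Definition sl_linear {J : Type} (l : list J) : Prop := NoDup l.

From Stdlib Require Import List Setoid Morphisms Program.Equality Permutation.
Import ListNotations.

(* Every morphism equals a normal form: the elements of the source are inserted
   one by one, [x :: l -> r] being [x ::ₘ (normal form of l)] followed by an
   insertion moving [x] to its place by swaps.  Normal forms are stable under
   precomposition with a swap because two consecutive insertions can be
   exchanged (naturality and Yang-Baxter).  If the source has no duplicates,
   the target determines each insertion, hence the whole normal form; and
   since morphisms permute their source, linearity is invariant. *)

Local Infix "∘" := sl_comp (at level 40, left associativity).
Local Notation "x ::ₘ f" := (sl_cons x f) (at level 60, right associativity).
Local Infix "≡" := SLEq (at level 70).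

Section SList.

Context {J : Type}.

#[local] Instance SLEq_Equivalence (l l' : list J) : Equivalence (@SLEq J l l').
Proof. split; red; eauto using SLEq. Qed.

#[local] Instance sl_comp_Proper (l1 l2 l3 : list J) :
  Proper (@SLEq J l2 l3 ==> @SLEq J l1 l2 ==> @SLEq J l1 l3) sl_comp.
Proof. repeat intro; apply sle_comp_cong; assumption. Qed.

#[local] Instance sl_cons_Proper (x : J) (l l' : list J) :
  Proper (@SLEq J l l' ==> @SLEq J (x :: l) (x :: l')) (sl_cons x).
Proof. repeat intro; apply sle_cons_cong; assumption. Qed.

Ltac by_assoc := rewrite ?sle_cons_comp; rewrite <- ?sle_assoc; reflexivity.

Inductive Insertion (x : J) : forall m r : list J, SLTm (x :: m) r -> Prop :=
| ins_here m : Insertion x m (x :: m) (sl_id (x :: m))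
| ins_past y m r (i : SLTm (x :: m) r) :
    Insertion x m r i -> Insertion x (y :: m) (y :: r) ((y ::ₘ i) ∘ sl_sw x y m).

Arguments Insertion x {m r} i.

Inductive NormalForm : forall l l' : list J, SLTm l l' -> Prop :=
| nf_nil : NormalForm [] [] (sl_id [])
| nf_cons x l m r (f : SLTm l m) (i : SLTm (x :: m) r) :
    NormalForm l m f -> Insertion x i -> NormalForm (x :: l) r (i ∘ (x ::ₘ f)).

Arguments NormalForm {l l'} f.

Lemma Insertion_exchange {a b : J} {m1 r} {i1 : SLTm (b :: m1) r} :
  Insertion b i1 -> forall {m2} {i2 : SLTm (a :: m2) m1}, Insertion a i2 ->
  exists m3 (j1 : SLTm (a :: m3) r) (j2 : SLTm (b :: m2) m3),
    Insertion a j1 /\ Insertion b j2 /\ i1 ∘ (b ::ₘ i2) ∘ sl_sw a b m2 ≡ j1 ∘ (a ::ₘ j2).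
Proof.
  induction 1 as [m1 | y m1 r i1 Hi1 IH]; intros m2 i2 Hi2.
  - exists (b :: m2), ((b ::ₘ i2) ∘ sl_sw a b m2), (sl_id (b :: m2)).
    split; [constructor; assumption | split; [constructor |]].
    rewrite sle_cons_id, sle_id_r, <- sle_assoc, sle_id_l. reflexivity.
  - dependent destruction Hi2.
    + exists r, (sl_id (y :: r)), i1.
      split; [constructor | split; [assumption |]].
      rewrite sle_cons_id, sle_id_r, sle_id_l, <- sle_assoc, sle_sw_inv, sle_id_r. reflexivity.
    + rename m into m2, i into i2.
      destruct (IH _ _ Hi2) as (m3 & j1 & j2 & Hj1 & Hj2 & E).
      exists (y :: m3), ((y ::ₘ j1) ∘ sl_sw a y m3), ((y ::ₘ j2) ∘ sl_sw b y m2).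
      split; [constructor; assumption | split; [constructor; assumption |]].
      transitivity ((y ::ₘ i1) ∘ (sl_sw b y _ ∘ (b ::ₘ y ::ₘ i2))
                    ∘ (b ::ₘ sl_sw a y m2) ∘ sl_sw a b _).
      { by_assoc. }
      rewrite sle_sw_nat.
      transitivity ((y ::ₘ i1) ∘ (y ::ₘ b ::ₘ i2)
                    ∘ (sl_sw b y _ ∘ ((b ::ₘ sl_sw a y m2) ∘ sl_sw a b _))).
      { by_assoc. }
      rewrite sle_sw_yb.
      transitivity ((y ::ₘ i1 ∘ (b ::ₘ i2) ∘ sl_sw a b m2)
                    ∘ (sl_sw a y _ ∘ (a ::ₘ sl_sw b y m2))).
      { by_assoc. }
      rewrite E.
      transitivity ((y ::ₘ j1) ∘ (sl_sw a y _ ∘ (a ::ₘ y ::ₘ j2)) ∘ (a ::ₘ sl_sw b y m2)).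
      { rewrite (sle_sw_nat a y j2). by_assoc. }
      by_assoc.
Qed.

Definition has_normal_form {l l' : list J} (f : SLTm l l') : Prop :=
  exists n, NormalForm n /\ f ≡ n.

Lemma has_normal_form_comp {l1 l2 : list J} (t : SLTm l1 l2) :
  forall {l3} {n : SLTm l2 l3}, NormalForm n -> has_normal_form (n ∘ t).
Proof.
  induction t as [l | l1 l2 l3 g IHg f IHf | a b l | x l l' t IH]; intros l4 n Hn.
  - exists n. split; [assumption | apply sle_id_r].
  - destruct (IHg _ _ Hn) as (n' & Hn' & E).
    destruct (IHf _ _ Hn') as (n'' & Hn'' & E').
    exists n''. split; [assumption |].
    rewrite sle_assoc, E, E'. reflexivity.
  - dependent destruction Hn; rename f into f1, i into i1, H into Hi1.
    dependent destruction Hn; rename f into f2, i into i2, H into Hi2.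
    destruct (Insertion_exchange Hi1 Hi2) as (m3 & j1 & j2 & Hj1 & Hj2 & E).
    exists (j1 ∘ (a ::ₘ j2 ∘ (b ::ₘ f2))).
    split; [repeat constructor; assumption |].
    transitivity (i1 ∘ (b ::ₘ i2) ∘ ((b ::ₘ a ::ₘ f2) ∘ sl_sw a b l)).
    { by_assoc. }
    rewrite <- sle_sw_nat.
    transitivity (i1 ∘ (b ::ₘ i2) ∘ sl_sw a b _ ∘ (a ::ₘ b ::ₘ f2)).
    { by_assoc. }
    rewrite E. by_assoc.
  - dependent destruction Hn.
    destruct (IH _ _ Hn) as (f' & Hf' & E).
    exists (i ∘ (x ::ₘ f')). split; [constructor; assumption |].
    rewrite <- sle_assoc, <- sle_cons_comp, E. reflexivity.
Qed.

Lemma has_normal_form_id (l : list J) : has_normal_form (sl_id l).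
Proof.
  induction l as [| x l (n & Hn & E)].
  - exists (sl_id []). split; [constructor | reflexivity].
  - exists (sl_id (x :: l) ∘ (x ::ₘ n)). split; [repeat constructor; assumption |].
    rewrite <- E, sle_cons_id, sle_id_l. reflexivity.
Qed.

Lemma has_normal_form_all {l l' : list J} (t : SLTm l l') : has_normal_form t.
Proof.
  destruct (has_normal_form_id l') as (n & Hn & E).
  destruct (has_normal_form_comp t Hn) as (n' & Hn' & E').
  exists n'. split; [assumption |].
  rewrite <- E', <- E, sle_id_l. reflexivity.
Qed.

Lemma SLTm_Permutation {l l' : list J} (t : SLTm l l') : Permutation l l'.
Proof. induction t; eauto using Permutation, perm_swap. Qed.

Lemma SLTm_not_In {l l' : list J} (t : SLTm l l') (x : J) : ~ In x l -> ~ In x l'.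
Proof. intros Hx H. apply Hx, (Permutation_in _ (Permutation_sym (SLTm_Permutation t)) H). Qed.

Lemma Insertion_source_unique {x : J} {m r} {i : SLTm (x :: m) r} :
  Insertion x i -> ~ In x m ->
  forall {m'} {i' : SLTm (x :: m') r}, Insertion x i' -> ~ In x m' -> m = m'.
Proof.
  induction 1 as [m | y m r i Hi IH]; intros Hx m' i' Hi' Hx'.
  - dependent destruction Hi'.
    + reflexivity.
    + contradiction (Hx' (in_eq _ _)).
  - dependent destruction Hi'.
    + contradiction (Hx (in_eq _ _)).
    + f_equal. apply (IH (fun H => Hx (or_intror H)) _ _ Hi' (fun H => Hx' (or_intror H))).
Qed.

Lemma Insertion_unique {x : J} {m r} {i i' : SLTm (x :: m) r} :
  Insertion x i -> Insertion x i' -> ~ In x m -> i ≡ i'.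
Proof.
  intros Hi; revert i'.
  induction Hi as [m | y m r i Hi IH]; intros i' Hi' Hx.
  - dependent destruction Hi'.
    + reflexivity.
    + contradiction (Hx (in_eq _ _)).
  - dependent destruction Hi'.
    + contradiction (Hx (in_eq _ _)).
    + rewrite (IH _ Hi' (fun H => Hx (or_intror H))). reflexivity.
Qed.

Lemma NormalForm_unique {l l' : list J} {n1 n2 : SLTm l l'} :
  NormalForm n1 -> NormalForm n2 -> NoDup l -> n1 ≡ n2.
Proof.
  intros Hn1; revert n2.
  induction Hn1 as [| x l m r f i Hf IH Hi]; intros n2 Hn2 Hl.
  - dependent destruction Hn2. reflexivity.
  - inversion_clear Hl as [| ? ? Hxl Hl'].
    dependent destruction Hn2; rename m0 into m', f0 into f', i0 into i', H into Hi'.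
    pose proof (SLTm_not_In f x Hxl) as Hxm.
    pose proof (SLTm_not_In f' x Hxl) as Hxm'.
    destruct (Insertion_source_unique Hi Hxm Hi' Hxm').
    rewrite (Insertion_unique Hi Hi' Hxm), (IH _ Hn2 Hl'). reflexivity.
Qed.

Lemma SLTm_NoDup_iff {l l' : list J} (t : SLTm l l') : NoDup l' <-> NoDup l.
Proof.
  pose proof (SLTm_Permutation t) as Hp.
  split; apply Permutation_NoDup; [apply Permutation_sym |]; assumption.
Qed.

Lemma SLEq_of_NoDup {l l' : list J} (f g : SLTm l l') : NoDup l -> f ≡ g.
Proof.
  intros Hl.
  destruct (has_normal_form_all f) as (nf & Hnf & Ef).
  destruct (has_normal_form_all g) as (ng & Hng & Eg).
  rewrite Ef, Eg. apply (NormalForm_unique Hnf Hng Hl).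
Qed.

End SList.

Theorem lemma4p11 (J : Type) (L1 L2 : list J) :
  (inhabited (SLTm L1 L2) -> (sl_linear L2 <-> sl_linear L1)) /\
  ((sl_linear L1 \/ sl_linear L2) -> forall f g : SLTm L1 L2, SLEq f g).
Proof.
  split.
  - intros [t]. apply (SLTm_NoDup_iff t).
  - intros Hlin f g. apply SLEq_of_NoDup.
    destruct Hlin as [H1 | H2]; [assumption |].
    apply (SLTm_NoDup_iff f), H2.
Qed.
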